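(* Let $\Gamma$ be a typing environment, $e$ an application term, $B$ a base type and $b$ a ground base type. If $\Gamma\vdash e \Rightarrow B$ (concrete algorithmic inference) and $b\sqsubseteq B$, then $\Gamma\vdash e : b$ (declarative typing).
   Context: Fix a set of type constructors, each with a fixed arity, and an infinite set of type variables. Base types are $B ::= \tau \mid C\,B_1\ldots B_k$; ground base types $b$ contain no type variables. Types are $T ::= B\mid B\to T$; ground types $t ::= b \mid b\to t$. A polytype is $\forall\tau_1\ldots\tau_n.T$. A component library $\Lambda$ is a finite map from component names $c$ to polytypes; the arity of $c$ is the number of arrows in $\Lambda(c)$. Substitutions $\sigma$ map type variables to base types (identity elsewhere). A bottom type $\bot$ is added; $\mathbf{B}_\bot$ = base types $\cup\{\bot\}$. $T'\sqsubseteq T$ iff $T'=\sigma T$ for some $\sigma$; $\bot\sqsubseteq B$ for all $B$; $\equiv$ is mutual $\sqsubseteq$. The bottom substitution $\sigma_\bot$ sends every type to $\bot$, and every substitution maps $\bot$ to $\bot$. $\mathrm{mgu}$ denotes the most general (simultaneous) unifier of a sequence of pairs of types, which is $\sigma_\bot$ if no proper unifier exists and the identity for the empty sequence. $\mathrm{fresh}(\forall\bar\tau.T)$ renames $\bar\tau$ to fresh variables. Type transformer: if $\mathrm{fresh}(\Lambda(c))=B'_1\to\cdots\to B'_m\to B'$ then $[\![c]\!](B_1,\ldots,B_m)=\sigma B'$ with $\sigma=\mathrm{mgu}(B_1,B'_1;\ldots;B_m,B'_m)$. Terms (in $\eta$-long form): application terms $e ::= x \mid c(e_1,\ldots,e_m)$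 with $m$ the arity of $c$; normal-form terms $E ::= e\mid \lambda x.E$. A typing environment $\Gamma$ maps variables to ground base types. Declarative typing $\Gamma\vdash E:t$ ($t$ ground): (Var) if $\Gamma(x)=b$ then $\Gamma\vdash x:b$; (App) if $\Lambda(c)=\forall\bar\tau.T$, $\sigma T=b_1\to\cdots\to b_m\to b$ is ground and $\Gamma\vdash e_i:b_i$ for all $i$, then $\Gamma\vdash c(e_1,\ldots,e_m):b$; (Fun) if $\Gamma,x{:}b\vdash E:t$ then $\Gamma\vdash\lambda x.E : b\to t$. Concrete algorithmic inference $\Gamma\vdash e\Rightarrow B$: if $\Gamma(x)=b$ then $\Gamma\vdash x\Rightarrow b$; if $\Gamma\vdash e_i\Rightarrow B_i$ for all $i$ then $\Gamma\vdash c(e_1,\ldots,e_m)\Rightarrow [\![c]\!](B_1,\ldots,B_m)$. *)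

From Stdlib Require Import List.
Import ListNotations.
Set Implicit Arguments.

Section TypeSystem.

(* Type constructor names [K], with arity [ar];
   component names [C]; term variables are [nat]; type variables are [nat]. *)
Variable K : Type.
Variable ar : K -> nat.
Variable C : Type.

Inductive bty : Type :=
| TVar : nat -> bty
| TCon : K -> list bty -> bty.

Fixpoint wf_bty (t : bty) : Prop :=
  match t with
  | TVar _ => True
  | TCon k ts => length ts = ar k /\ fold_right (fun u acc => wf_bty u /\ acc) True ts
  end.

Fixpoint occurs (n : nat) (t : bty) : Prop :=
  match t with
  | TVar m => n = m
  | TCon _ ts => fold_right (fun u acc => occurs n u \/ acc) False ts
  end.

Definition ground (t : bty) : Prop := forall n, ~ occurs n t.

(* Types T ::= B | B -> T, represented as (B1 :: .. :: Bm, B) for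
   B1 -> .. -> Bm -> B.  A polytype forall tau1..taun. T is (taus, T). *)
Record ty := mkTy { ty_args : list bty; ty_res : bty }.
Record polytype := mkPoly { pt_vars : list nat; pt_ty : ty }.

Definition closed_poly (p : polytype) : Prop :=
  forall n, (Exists (occurs n) (ty_args (pt_ty p)) \/ occurs n (ty_res (pt_ty p))) ->
            In n (pt_vars p).

Definition wf_poly (p : polytype) : Prop :=
  Forall wf_bty (ty_args (pt_ty p)) /\ wf_bty (ty_res (pt_ty p)) /\ closed_poly p.

(* component library: (finite) partial map from component names to polytypes;
   the arity of c is the number of arrows, i.e. length of ty_args *)
Definition library := C -> option polytype.

Fixpoint subst (s : nat -> bty) (t : bty) : bty :=
  match t with
  | TVar n => s n
  | TCon k ts => TCon k (map (subst s) ts)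
  end.

(* B_bot = option bty, with None = bottom.
   Substitutions with bottom: SBot = sigma_bot, or a proper substitution. *)
Inductive sub := SBot | SProper (s : nat -> bty).

Definition app_sub (sg : sub) (t : option bty) : option bty :=
  match sg with
  | SBot => None
  | SProper s => option_map (subst s) t
  end.

(* T' ⊑ T  iff T' = sigma T for some sigma (this includes bot ⊑ B via sigma_bot) *)
Definition sqle (t' t : option bty) : Prop := exists sg : sub, t' = app_sub sg t.

Definition unifies (sg : sub) (ps : list (option bty * option bty)) : Prop :=
  Forall (fun p => app_sub sg (fst p) = app_sub sg (snd p)) ps.

Definition is_mgu (ps : list (option bty * option bty)) (sg : sub) : Prop :=
  (sg = SBot /\ forall s, ~ unifies (SProper s) ps)
  \/ (exists s, sg = SProper s /\ unifies (SProper s) ps /\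
        forall s', unifies (SProper s') ps ->
          exists th, forall n, s' n = subst th (s n)).

(* fresh(forall taus. T): rename the bound variables injectively to variables
   not occurring in the given arguments *)
Definition renaming (taus : list nat) (rho : nat -> nat) (n : nat) : bty :=
  if in_dec PeanoNat.Nat.eq_dec n taus then TVar (rho n) else TVar n.

Definition fresh_for (taus : list nat) (rho : nat -> nat) (Bs : list (option bty)) : Prop :=
  (forall x y, In x taus -> In y taus -> rho x = rho y -> x = y) /\
  (forall x, In x taus -> forall B, In (Some B) Bs -> ~ occurs (rho x) B).

Variable Lam : library.

Definition transformer (c : C) (Bs : list (option bty)) (R : option bty) : Prop :=
  exists p, Lam c = Some p /\
  exists rho, fresh_for (pt_vars p) rho Bs /\
  let fr := subst (renaming (pt_vars p) rho) in
  let args' := map fr (ty_args (pt_ty p)) in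
  length Bs = length args' /\
  exists sg, is_mgu (combine Bs (map Some args')) sg /\
    R = app_sub sg (Some (fr (ty_res (pt_ty p)))).

Inductive tm : Type :=
| TmVar : nat -> tm
| TmApp : C -> list tm -> tm.

Definition env := nat -> option bty.

Inductive infer (G : env) : tm -> option bty -> Prop :=
| Inf_Var : forall x b, G x = Some b -> infer G (TmVar x) (Some b)
| Inf_App : forall c es Bs R,
    Forall2 (infer G) es Bs ->
    transformer c Bs R ->
    infer G (TmApp c es) R.

Inductive decl (G : env) : tm -> bty -> Prop :=
| Decl_Var : forall x b, G x = Some b -> decl G (TmVar x) b
| Decl_App : forall c es p s,
    Lam c = Some p ->
    Forall ground (map (subst s) (ty_args (pt_ty p))) ->
    ground (subst s (ty_res (pt_ty p))) ->
    Forall2 (decl G) es (map (subst s) (ty_args (pt_ty p))) ->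
    decl G (TmApp c es) (subst s (ty_res (pt_ty p))).

End TypeSystem.

(** Induct on the inference derivation, showing that every ground instance
    of an inferred type is declaratively derivable.  If [c(e_1,..,e_m)] is
    inferred as [sigma B'], where [sigma] unifies each [B_i] with [B'_i], a
    ground instance [b = sigma' (sigma B')] arises in rule (App) from the
    instantiation [g o sigma' o sigma o fresh], with [g] sending every
    variable to [b] (any ground type would do).  The same instantiation turns
    each [B'_i] into a ground instance of [B_i], typed by induction. *)
From Stdlib Require Import List.
Import ListNotations.
Set Implicit Arguments.

Lemma Forall2_compose (A B D E : Type) (P : A -> B -> Prop) (Q : B -> D -> Prop)
    (R : A -> E -> Prop) (f : D -> E) xs ys zs :
  Forall2 P xs ys -> Forall2 Q ys zs ->
  (forall x y z, P x y -> Q y z -> R x (f z)) ->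
  Forall2 R xs (map f zs).
Proof.
  intros HP; revert zs; induction HP as [|x y xs ys Pxy _ IH];
    intros zs HQ HR; inversion HQ; subst; simpl; constructor; eauto.
Qed.

Section Substitution.

Variable K : Type.

Fixpoint bty_nested_ind (P : bty K -> Prop) (HV : forall n, P (TVar K n))
    (HC : forall k ts, Forall P ts -> P (TCon k ts)) (t : bty K) : P t :=
  match t with
  | TVar _ n => HV n
  | TCon k ts =>
      HC k ts ((fix go l := match l return Forall P l with
                            | [] => Forall_nil _
                            | u :: l => Forall_cons _ (bty_nested_ind HV HC u) (go l)
                            end) ts)
  end.

Lemma subst_comp (f g : nat -> bty K) t :
  subst f (subst g t) = subst (fun n => subst f (g n)) t.
Proof.
  induction t as [n|k ts IH] using bty_nested_ind; simpl; auto.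
  f_equal; rewrite map_map; induction IH; simpl; f_equal; auto.
Qed.

Lemma subst_ext (f g : nat -> bty K) t : (forall n, f n = g n) -> subst f t = subst g t.
Proof.
  intros E; induction t as [n|k ts IH] using bty_nested_ind; simpl; auto.
  f_equal; induction IH; simpl; f_equal; auto.
Qed.

Lemma occurs_TCon n k (ts : list (bty K)) :
  occurs n (TCon k ts) <-> Exists (occurs n) ts.
Proof.
  simpl; induction ts as [|u ts IH]; simpl.
  - split; [contradiction | inversion 1].
  - rewrite Exists_cons, IH; tauto.
Qed.

Lemma subst_ground (s : nat -> bty K) t : ground t -> subst s t = t.
Proof.
  induction t as [n|k ts IH] using bty_nested_ind; intros Hg; simpl.
  - exfalso; apply (Hg n); reflexivity.
  - f_equal; induction IH as [|u ts Hu _ IHts]; simpl; auto.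
    f_equal.
    + apply Hu; intros m Hm; apply (Hg m), occurs_TCon; auto.
    + apply IHts; intros m Hm; apply (Hg m), occurs_TCon.
      apply occurs_TCon in Hm; auto.
Qed.

Lemma occurs_subst (f : nat -> bty K) n t :
  occurs n (subst f t) -> exists m, occurs n (f m).
Proof.
  induction t as [m|k ts IH] using bty_nested_ind; simpl; intros Ho; eauto.
  change (occurs n (TCon k (map (subst f) ts))) in Ho.
  apply occurs_TCon in Ho; induction IH; simpl in Ho; inversion Ho; auto.
Qed.

Lemma ground_subst (f : nat -> bty K) t :
  (forall n, ground (f n)) -> ground (subst f t).
Proof.
  intros Hf n Ho; destruct (occurs_subst f n t Ho) as [m Hm]; exact (Hf m n Hm).
Qed.

Lemma sqle_Some (b : bty K) (B : option (bty K)) :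
  sqle (Some b) B -> exists B0 s, B = Some B0 /\ b = subst s B0.
Proof.
  intros [[|s] E]; [discriminate|].
  destruct B as [B0|]; [|discriminate]; injection E; eauto.
Qed.

Lemma unifies_combine (s : nat -> bty K) (A : Type) (f : A -> bty K)
    (Bs : list (option (bty K))) (As : list A) :
  length Bs = length As ->
  unifies (SProper s) (combine Bs (map Some (map f As))) ->
  Forall2 (fun B a => exists B0, B = Some B0 /\ subst s B0 = subst s (f a)) Bs As.
Proof.
  revert As; induction Bs as [|B Bs IH]; intros [|a As] HL HU; try discriminate.
  - constructor.
  - inversion HU as [|? ? Hhd Htl]; subst.
    destruct B as [B0|]; simpl in Hhd; [|discriminate].
    injection Hhd; constructor; eauto.
Qed.

End Substitution.

Section Inference.

Variables (K C : Type) (Lam : library K C) (G : env K).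

Lemma infer_nested_ind (P : tm C -> option (bty K) -> Prop)
    (HVar : forall x b, G x = Some b -> P (TmVar C x) (Some b))
    (HApp : forall c es Bs R, Forall2 P es Bs -> transformer Lam c Bs R ->
              P (TmApp c es) R) :
  forall e B, infer Lam G e B -> P e B.
Proof.
  fix IH 3; intros e B [x b Hx | c es Bs R HF HT]; [now apply HVar|].
  apply (HApp c es Bs R); [clear HT | exact HT].
  induction HF; constructor; auto.
Qed.

Definition types_ground_instances (e : tm C) (B : option (bty K)) : Prop :=
  forall b, ground b -> sqle (Some b) B -> decl Lam G e b.

Lemma transformer_ground_instances c es Bs R :
  Forall2 types_ground_instances es Bs -> transformer Lam c Bs R ->
  types_ground_instances (TmApp c es) R.
Proof.
  intros IH [p [Hp [rho [_ [HL [sg [Hmgu HR]]]]]]] b Hb Hsq; subst R.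
  destruct (sqle_Some Hsq) as [B0 [s' [HR Hbe]]].
  destruct Hmgu as [[-> _] | [s [-> [HU _]]]]; [discriminate|].
  injection HR as <-.
  set (ren := renaming K (pt_vars p) rho) in *.
  set (w := fun n => subst (fun _ => b) (subst s' (s n))).
  assert (Hw : forall t, subst w t = subst (fun _ => b) (subst s' (subst s t))).
  { intros t; rewrite !subst_comp; apply subst_ext; intros n; apply subst_comp. }
  set (th := fun n => subst w (ren n)).
  assert (Hth : forall t, subst th t = subst w (subst ren t)) by
    (intros; symmetry; apply subst_comp).
  assert (Hres : subst th (ty_res (pt_ty p)) = b).
  { now rewrite Hth, Hw, <- Hbe, subst_ground. }
  assert (Hgr : forall t, ground (subst th t)) by
    (intros; do 3 (apply ground_subst; intros); exact Hb).
  rewrite <- Hres.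
  apply Decl_App; auto.
  - apply Forall_forall; intros x Hx; apply in_map_iff in Hx.
    destruct Hx as [a [<- _]]; auto.
  - rewrite length_map in HL.
    eapply Forall2_compose; [exact IH | eapply unifies_combine; eassumption |].
    intros e B a IHe [B1 [-> Hunif]]; apply IHe; auto.
    exists (SProper w); simpl.
    now rewrite Hth, !Hw, Hunif.
Qed.

Hypothesis HG : forall x b, G x = Some b -> ground b.

Lemma infer_ground_instances e B :
  infer Lam G e B -> types_ground_instances e B.
Proof.
  revert e B; apply infer_nested_ind.
  - intros x b' Hx b _ Hsq; destruct (sqle_Some Hsq) as [B0 [s [[= <-] ->]]].
    rewrite subst_ground by exact (HG Hx); now constructor.
  - intros c es Bs R IH HT; exact (transformer_ground_instances IH HT).
Qed.

End Inference.

Theorem mainTheorem3 (K : Type) (ar : K -> nat) (C : Type) (Lam : library K C)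
  (HLam : forall c p, Lam c = Some p -> wf_poly ar p)
  (G : env K)
  (HG : forall x b, G x = Some b -> ground b /\ wf_bty ar b)
  (e : tm C) (B : option (bty K)) (b : bty K)
  (Hb : ground b) (Hbwf : wf_bty ar b) :
  infer Lam G e B -> sqle (Some b) B -> decl Lam G e b.
Proof.
  intros Hinf.
  exact (infer_ground_instances (fun x b0 Hx => proj1 (HG x b0 Hx)) Hinf Hb).
Qed.
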